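(* Let the problem, the cone $\mathcal{C}$ and the algorithm $\widetilde A$ be as in the context. Then: - $\widetilde A\in\mathcal{A}(\mathcal{C})$. - For every $f\in\mathcal{C}$ and $\varepsilon>0$, $\mathrm{cost}(\widetilde A,f,\varepsilon)=n_{j^*}$, where $j^*=\min\{j\in\mathbb{N}:\sigma_j(f)\le\varepsilon\sqrt{1-b^2}/(ab)\}$. - For all $\varepsilon,\rho>0$, $\mathrm{cost}(\widetilde A,\mathcal{C},\varepsilon,\rho)\le n_{j^\dagger}$ for some positive integer $j^\dagger$ satisfying $$j^\dagger\le\min\Big\{j\in\mathbb{N}:\frac{\rho^2}{\varepsilon^2}\le\frac{1-b^2}{a^2b^2}\Big[\sum_{k=1}^{j-1}\frac{b^{2(k-j)}}{a^2\lambda_{n_{k-1}+1}^2}+\frac{1}{\lambda_{n_{j-1}+1}^2}\Big]\Big\}.$$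
   Context: Let $\mathcal{F}$ and $\mathcal{G}$ be separable Hilbert spaces with orthonormal bases $(u_i)_{i\in\mathbb{N}}$ and $(v_i)_{i\in\mathbb{N}}$. Write $f=\sum_i\widehat f_iu_i$ with $\|f\|_{\mathcal{F}}=\|(\widehat f_i)_i\|_{\ell^2}$, and similarly for $\mathcal{G}$. Let $S:\mathcal{F}\to\mathcal{G}$ be the linear operator $S(f)=\sum_i\lambda_i\widehat f_iv_i$, where $\lambda_1\ge\lambda_2\ge\cdots>0$ and $\lambda_i\to0$. For $n\ge0$ let $A_n(f)=\sum_{i=1}^n\lambda_i\widehat f_iv_i$; it uses the $n$ values $\widehat f_1,\dots,\widehat f_n$. Let $\mathcal{B}_\rho=\{f:\|f\|_{\mathcal{F}}\le\rho\}$. For $\mathcal{H}\subseteq\mathcal{F}$, $\mathcal{A}(\mathcal{H})$ is the set of deterministic algorithms $A:\mathcal{H}\times(0,\infty)\to\mathcal{G}$, adaptively sampling finitely many bounded linear functionals of the input, with $\|S(f)-A(f,\varepsilon)\|_{\mathcal{G}}\le\varepsilon$ for all $f\in\mathcal{H}$ and all $\varepsilon>0$. $\mathrm{cost}(A,f,\varepsilon)$ is the number of linear functional values used to compute $A(f,\varepsilon)$, and $\mathrm{cost}(A,\mathcal{H},\varepsilon,\rho)=\sup\{\mathrm{cost}(A,f,\varepsilon):f\in\mathcal{H}\cap\mathcal{B}_\rho\}$. Let $n_0<n_1<n_2<\cdots$ be a strictly increasing, unbounded sequence of non-negative integers. For $j\in\mathbb{N}=\{1,2,\dots\}$ let $\sigma_j(f)=\|(\lambda_i\widehat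 f_i)_{i=n_{j-1}+1}^{n_j}\|_{\ell^2}$. Fix constants $0<b<1<a$ and define the cone $$\mathcal{C}=\{f\in\mathcal{F}:\sigma_{j+r}(f)\le ab^r\sigma_j(f)\ \forall j,r\in\mathbb{N}\}.$$ The algorithm $\widetilde A$ works as follows. Given $f\in\mathcal{C}$ and $\varepsilon>0$, for $j=1,2,\dots$ it computes $\sigma_j(f)$. At the first $j$ with $\sigma_j(f)\le\varepsilon\sqrt{1-b^2}/(ab)$, it returns $\widetilde A(f,\varepsilon)=A_{n_j}(f)$. *)

From Stdlib Require Import Reals Lra Lia List Arith.
From Coquelicot Require Import Coquelicot.
Open Scope R_scope.

(* Conventions: an element f of F (resp. G) is represented by
   its coefficient sequence fh : nat -> R w.r.t. the orthonormal basis, indexed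
   from 0 (paper index i corresponds to index i-1 here).  Bounded linear
   functionals on F are represented (Riesz) by sequences l in l^2, acting by
   L(f) = sum_i l_i fh_i. *)

Definition in_l2 (fh : nat -> R) : Prop := ex_series (fun i => fh i ^ 2).
Definition l2norm (fh : nat -> R) : R := sqrt (Series (fun i => fh i ^ 2)).

Definition dist_le (g h : nat -> R) (eps : R) : Prop :=
  in_l2 (fun i => g i - h i) /\ l2norm (fun i => g i - h i) <= eps.

(* The solution operator S(f) = sum_i lambda_i fh_i v_i. *)
Definition Sop (lam : nat -> R) (fh : nat -> R) : nat -> R :=
  fun i => lam i * fh i.

Definition apply_fun (l fh : nat -> R) : R := Series (fun i => l i * fh i).

(* At each step, given eps and the list of values observed so far, the
   algorithm either queries a further linear functional or stops with an
   output in G. *)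
Inductive action : Type :=
  | Query : (nat -> R) -> action
  | Stop  : (nat -> R) -> action.

Definition algorithm := R -> list R -> action.

Fixpoint obs (A : algorithm) (fh : nat -> R) (eps : R) (k : nat) : list R :=
  match k with
  | O => nil
  | S k' =>
      let o := obs A fh eps k' in
      match A eps o with
      | Query l => o ++ (apply_fun l fh :: nil)
      | Stop _ => o
      end
  end.

Definition bounded_query (act : action) : Prop :=
  exists l, act = Query l /\ in_l2 l.

(* A, on input (f, eps), queries exactly k bounded linear functionals
   (so cost(A, f, eps) = k) and then returns g. *)
Definition halts_with (A : algorithm) (fh : nat -> R) (eps : R) (k : nat)
  (g : nat -> R) : Prop :=
  (forall k', (k' < k)%nat -> bounded_query (A eps (obs A fh eps k'))) /\
  A eps (obs A fh eps k) = Stop g.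

Definition in_alg_class (lam : nat -> R) (A : algorithm) (H : (nat -> R) -> Prop)
  : Prop :=
  forall fh, H fh -> forall eps, 0 < eps ->
    exists k g, halts_with A fh eps k g /\ dist_le (Sop lam fh) g eps.

(* sigma_j(f), j >= 1: l2 norm of (lambda_i fh_i) for paper indices
   n_{j-1}+1 .. n_j, i.e. 0-based indices n_{j-1} .. n_j - 1. *)
Definition sigma_blk (lam : nat -> R) (n : nat -> nat) (fh : nat -> R) (j : nat) : R :=
  sqrt (sum_n_m (fun i => (lam i * fh i) ^ 2) (n (j - 1)%nat) (Nat.pred (n j))).

Definition cone (lam : nat -> R) (n : nat -> nat) (a b : R) (fh : nat -> R) : Prop :=
  in_l2 fh /\
  forall j r : nat, (1 <= j)%nat -> (1 <= r)%nat ->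
    sigma_blk lam n fh (j + r) <= a * b ^ r * sigma_blk lam n fh j.

Definition thr (a b eps : R) : R := eps * sqrt (1 - b ^ 2) / (a * b).

Fixpoint search_blk (n : nat -> nat) (m k : nat) : option nat :=
  match k with
  | O => None
  | S k' => if Nat.eqb (n (S k')) m then Some (S k') else search_blk n m k'
  end.

(* Some j iff m = n_j for some j >= 1 (necessarily j <= m as n is strictly
   increasing). *)
Definition block_end (n : nat -> nat) (m : nat) : option nat := search_blk n m m.

Definition coord (m : nat) : nat -> R := fun i => if Nat.eqb i m then 1 else 0.

(* The algorithm A~: it queries hat f_1, hat f_2, ... in order; whenever the
   number of observed values equals n_j (j >= 1) it computes sigma_j and stops
   with A_{n_j}(f) if sigma_j <= eps sqrt(1-b^2)/(ab). *)
Definition Atilde (lam : nat -> R) (n : nat -> nat) (a b : R) : algorithm :=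
  fun eps o =>
    let m := length o in
    let v := fun i => nth i o 0 in
    match block_end n m with
    | Some j =>
        if Rle_dec (sigma_blk lam n v j) (thr a b eps)
        then Stop (fun i => if Nat.ltb i m then lam i * v i else 0)
        else Query (coord m)
    | None => Query (coord m)
    end.

(* bracket in the bound for j^dagger:
   (1-b^2)/(a^2 b^2) [ sum_{k=1}^{j-1} b^{2(k-j)} / (a^2 lambda_{n_{k-1}+1}^2)
                       + 1/lambda_{n_{j-1}+1}^2 ]   (paper's 1-based lambda) *)
Definition jdag_rhs (lam : nat -> R) (n : nat -> nat) (a b : R) (j : nat) : R :=
  (1 - b ^ 2) / (a ^ 2 * b ^ 2) *
  (sum_n_m (fun k => powerRZ b (2 * (Z.of_nat k - Z.of_nat j))
                       / (a ^ 2 * lam (n (k - 1)%nat) ^ 2)) 1 (j - 1)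
   + 1 / lam (n (j - 1)%nat) ^ 2).

From Stdlib Require Import Reals Lra Lia List Arith ConstructiveEpsilon FunctionalExtensionality.
From Coquelicot Require Import Coquelicot.
Open Scope R_scope.

(* The cone condition makes the block norms decay geometrically beyond any block,
   sigma_(j+r) <= a b^r sigma_j.  Hence a block j* with sigma_[j*] <= eps sqrt(1-b^2)/(ab)
   exists (as b^r -> 0), and the part of S(f) that A_[n_[j*]] discards has squared norm at
   most sum_(r>=1) a^2 b^(2r) sigma_[j*]^2 = a^2 b^2 sigma_[j*]^2 / (1-b^2) <= eps^2.
   Conversely, if the algorithm has not stopped after block j, then sigma_j exceeds the
   threshold.  Reading the cone condition backwards (sigma_j <= a b^(j-k) sigma_k) and using
   that lambda is nonincreasing (sigma_k <= lambda_(n_(k-1)+1) times the norm of f on block k)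
   bounds every block of f from below, so that
   ||f||^2 >= sigma_j^2 [sum_(k<j) b^(2(k-j)) / (a^2 lambda_(n_(k-1)+1)^2) + 1/lambda_(n_(j-1)+1)^2],
   which exceeds rho^2 as soon as j satisfies the inequality defining j-dagger. *)

Lemma sum_n_m_le_loc (f g : nat -> R) p q :
  (forall k, (p <= k <= q)%nat -> f k <= g k) -> sum_n_m f p q <= sum_n_m g p q.
Proof.
  intros Hfg.
  rewrite (sum_n_m_ext_loc f (fun k => Rmin (f k) (g k))).
  - apply sum_n_m_le. intros k. apply Rmin_r.
  - intros k Hk. symmetry. apply Rmin_left, Hfg, Hk.
Qed.

Lemma sum_n_m_nonneg (f : nat -> R) p q :
  (forall k, 0 <= f k) -> 0 <= sum_n_m f p q.
Proof.
  intros Hf. replace 0 with (sum_n_m (fun _ => 0) p q) at 1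
    by exact (sum_n_m_const_zero (G := R_AbelianMonoid) p q).
  now apply sum_n_m_le.
Qed.

Lemma sum_n_m_shift (f : nat -> R) s p q :
  sum_n_m (fun k => f (s + k)%nat) p q = sum_n_m f (s + p) (s + q).
Proof.
  revert f. induction s as [|s IHs]; intros f; [reflexivity|].
  simpl. rewrite <- sum_n_m_S. exact (IHs (fun k => f (S k))).
Qed.

Lemma sum_n_m_split (f : nat -> R) p m q :
  (p <= S m)%nat -> (m <= q)%nat -> sum_n_m f p q = sum_n_m f p m + sum_n_m f (S m) q.
Proof. exact (sum_n_m_Chasles f p m q). Qed.

Section NonnegSeries.

Variable f : nat -> R.
Hypothesis f_nonneg : forall k, 0 <= f k.

Lemma sum_n_le_sum_n N M : (N <= M)%nat -> sum_n f N <= sum_n f M.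
Proof.
  intros HNM. unfold sum_n.
  rewrite (sum_n_m_split f 0 N M) by lia.
  pose proof (sum_n_m_nonneg f (S N) M f_nonneg). lra.
Qed.

Lemma sum_n_m_le_sum_n p q : sum_n_m f p q <= sum_n f q.
Proof.
  unfold sum_n. destruct p as [|p]; [lra|].
  destruct (le_lt_dec p q) as [Hpq|Hqp].
  - rewrite (sum_n_m_split f 0 p q) by lia.
    pose proof (sum_n_m_nonneg f 0 p f_nonneg). lra.
  - rewrite sum_n_m_zero by lia. now apply sum_n_m_nonneg.
Qed.

Hypothesis f_summable : ex_series f.

Lemma sum_n_le_Series N : sum_n f N <= Series f.
Proof.
  apply is_lim_seq_incr_compare; [apply Series_correct, f_summable|].
  intros k. apply sum_n_le_sum_n. lia.
Qed.

Lemma sum_n_m_le_Series p q : sum_n_m f p q <= Series f.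
Proof. eapply Rle_trans; [apply sum_n_m_le_sum_n | apply sum_n_le_Series]. Qed.

End NonnegSeries.

Lemma Series_le_of_sum_n_le (f : nat -> R) B :
  ex_series f -> (forall N, sum_n f N <= B) -> Series f <= B.
Proof.
  intros Hf HB.
  exact (is_lim_seq_le _ _ (Series f) B HB (Series_correct _ Hf) (is_lim_seq_const B)).
Qed.

Lemma sum_pow_le (q : R) r : 0 <= q < 1 -> sum_n_m (pow q) 1 r <= q / (1 - q).
Proof.
  intros Hq.
  assert (Hgeom : sum_n (pow q) r <= / (1 - q)).
  { rewrite <- (is_series_unique _ _ (is_series_geom q ltac:(rewrite Rabs_pos_eq; lra))).
    apply sum_n_le_Series; [intros k; now apply pow_le|].
    eexists. apply is_series_geom. rewrite Rabs_pos_eq; lra. }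
  unfold sum_n in Hgeom. rewrite (sum_n_m_split _ 0 0 r), sum_n_n in Hgeom by lia.
  simpl in Hgeom. replace (q / (1 - q)) with (/ (1 - q) - 1) by (field; lra). lra.
Qed.

Lemma in_l2_dominated (g f : nat -> R) C :
  (forall i, g i ^ 2 <= C * f i ^ 2) -> in_l2 f -> in_l2 g.
Proof.
  intros Hgf Hf. apply (@ex_series_le R_AbsRing R_CompleteNormedModule _ (fun i => C * f i ^ 2)).
  - intros i. change (Rabs (g i ^ 2) <= C * f i ^ 2).
    rewrite Rabs_pos_eq by apply pow2_ge_0. apply Hgf.
  - exact (ex_series_scal_l C _ Hf).
Qed.

Lemma ex_least_index (u v : nat -> R) :
  (exists j, (1 <= j)%nat /\ u j <= v j) ->
  exists j, ((1 <= j)%nat /\ u j <= v j) /\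
    forall k, (1 <= k)%nat /\ u k <= v k -> (j <= k)%nat.
Proof.
  intros Hex.
  assert (Hdec : forall j, {(1 <= j)%nat /\ u j <= v j} + {~ ((1 <= j)%nat /\ u j <= v j)}).
  { intros j. destruct (le_dec 1 j), (Rle_dec (u j) (v j)); tauto. }
  destruct (epsilon_smallest _ Hdec Hex) as [j Hj]. now exists j.
Qed.

Lemma halts_with_cost_unique (A : algorithm) fh eps k k' g g' :
  halts_with A fh eps k g -> halts_with A fh eps k' g' -> k = k'.
Proof.
  intros [Hq Hs] [Hq' Hs'].
  destruct (lt_eq_lt_dec k k') as [[Hlt|]|Hlt]; [|assumption|].
  - destruct (Hq' k Hlt) as [l [Hl _]]. congruence.
  - destruct (Hq k' Hlt) as [l [Hl _]]. congruence.
Qed.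

Section Blocks.

Variable n : nat -> nat.
Hypothesis n_incr : forall j, (n j < n (S j))%nat.

Lemma n_lt_n i j : (i < j)%nat -> (n i < n j)%nat.
Proof.
  induction 1 as [|j _ IH]; [apply n_incr|]. specialize (n_incr j). lia.
Qed.

Lemma n_le_n i j : (i <= j)%nat -> (n i <= n j)%nat.
Proof.
  intros Hij. destruct (Nat.eq_dec i j) as [->|]; [lia|].
  pose proof (n_lt_n i j ltac:(lia)). lia.
Qed.

Lemma n_lt_n_iff i j : (n i < n j)%nat <-> (i < j)%nat.
Proof.
  split; [|apply n_lt_n].
  intros Hn. destruct (le_lt_dec j i) as [Hji|]; [|assumption].
  pose proof (n_le_n j i Hji). lia.
Qed.

Lemma le_n_self j : (j <= n j)%nat.
Proof. induction j as [|j IH]; [lia|]. specialize (n_incr j). lia. Qed.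

Lemma block_end_Some m j : block_end n m = Some j -> (1 <= j)%nat /\ n j = m.
Proof.
  unfold block_end. generalize m at 2 as k.
  induction k as [|k IH]; simpl; [discriminate|].
  destruct (Nat.eqb_spec (n (S k)) m) as [Hk|]; [|exact IH].
  intros [= <-]. split; [lia | exact Hk].
Qed.

Lemma block_end_n j : (1 <= j)%nat -> block_end n (n j) = Some j.
Proof.
  intros Hj. unfold block_end. pose proof (le_n_self j) as Hjn. revert Hjn.
  generalize (n j) at 1 3 as k.
  induction k as [|k IH]; intros Hjk; simpl; [lia|].
  destruct (Nat.eqb_spec (n (S k)) (n j)) as [Hk|Hk].
  - pose proof (n_lt_n_iff (S k) j). pose proof (n_lt_n_iff j (S k)).
    f_equal. lia.
  - apply IH. destruct (Nat.eq_dec j (S k)) as [->|]; [contradiction|lia].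
Qed.

Definition block_sum (g : nat -> R) (j : nat) : R :=
  sum_n_m g (n (j - 1)) (Nat.pred (n j)).

Lemma sum_n_m_blocks (g : nat -> R) p q :
  (p < q)%nat -> sum_n_m g (n p) (Nat.pred (n q)) = sum_n_m (block_sum g) (S p) q.
Proof.
  induction 1 as [|q Hpq IH].
  - rewrite sum_n_n. unfold block_sum. now rewrite Nat.sub_1_r.
  - pose proof (n_lt_n p q Hpq). pose proof (n_incr q).
    rewrite (sum_n_m_split _ (n p) (Nat.pred (n q))) by lia.
    rewrite (sum_n_m_split _ (S p) q (S q)), sum_n_n by lia.
    rewrite IH. unfold block_sum. simpl. rewrite Nat.sub_0_r.
    replace (S (Nat.pred (n q))) with (n q) by lia. reflexivity.
Qed.

End Blocks.

Lemma sum_n_coord m fh N :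
  sum_n (fun i => coord m i * fh i) N = (if Nat.leb m N then fh m else 0) :> R.
Proof.
  unfold sum_n. induction N as [|N IH].
  - rewrite sum_n_n. unfold coord. destruct m; simpl; ring.
  - rewrite (sum_n_m_split _ 0 N (S N)), sum_n_n, IH by lia. unfold coord.
    destruct (Nat.eqb_spec (S N) m), (Nat.leb_spec m N), (Nat.leb_spec m (S N));
      subst; (lia || ring).
Qed.

Lemma is_series_coord m fh : is_series (fun i => coord m i * fh i) (fh m).
Proof.
  assert (Hlim : is_lim_seq (sum_n (fun i => coord m i * fh i)) (fh m)).
  { apply (is_lim_seq_ext_loc (fun _ => fh m)); [|apply is_lim_seq_const].
    exists m. intros N HN. rewrite sum_n_coord.
    destruct (Nat.leb_spec m N); [reflexivity | lia]. }
  exact Hlim.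
Qed.

Lemma apply_fun_coord m fh : apply_fun (coord m) fh = fh m.
Proof. apply is_series_unique, is_series_coord. Qed.

Lemma in_l2_coord m : in_l2 (coord m).
Proof.
  exists 1. apply (is_series_ext (fun i => coord m i * 1)); [|apply is_series_coord].
  intros i. change (coord m i * 1 = coord m i ^ 2 :> R).
  unfold coord. destruct (Nat.eqb i m); ring.
Qed.

Definition prefix (fh : nat -> R) (k : nat) : list R := map fh (seq 0 k).

Lemma length_prefix fh k : length (prefix fh k) = k.
Proof. unfold prefix. now rewrite length_map, length_seq. Qed.

Lemma nth_prefix fh k i : (i < k)%nat -> nth i (prefix fh k) 0 = fh i.
Proof.
  intros Hik. unfold prefix.
  rewrite (nth_indep _ _ (fh 0%nat)) by now rewrite length_map, length_seq.
  now rewrite map_nth, seq_nth.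
Qed.

Lemma prefix_S fh k : prefix fh (S k) = prefix fh k ++ fh k :: nil.
Proof. unfold prefix. now rewrite seq_S, map_app. Qed.

Definition Sop_trunc (lam : nat -> R) (m : nat) (fh : nat -> R) : nat -> R :=
  fun i => if Nat.ltb i m then lam i * fh i else 0.

Definition is_first_small_block (lam : nat -> R) (n : nat -> nat) (a b : R)
  (fh : nat -> R) (eps : R) (J : nat) : Prop :=
  (1 <= J)%nat /\ sigma_blk lam n fh J <= thr a b eps /\
  forall j, (1 <= j < J)%nat -> thr a b eps < sigma_blk lam n fh j.

Section Execution.

Variables (lam : nat -> R) (n : nat -> nat) (a b : R).
Hypothesis n_incr : forall j, (n j < n (S j))%nat.

Lemma sigma_blk_prefix fh j :
  (1 <= j)%nat ->
  sigma_blk lam n (fun i => nth i (prefix fh (n j)) 0) j = sigma_blk lam n fh j.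
Proof.
  intros Hj. unfold sigma_blk. f_equal. apply sum_n_m_ext_loc.
  intros i Hi. rewrite nth_prefix; [reflexivity|].
  pose proof (n_lt_n n n_incr (j - 1) j ltac:(lia)). lia.
Qed.

Lemma Atilde_prefix fh eps k :
  Atilde lam n a b eps (prefix fh k) =
  match block_end n k with
  | Some j =>
      if Rle_dec (sigma_blk lam n fh j) (thr a b eps)
      then Stop (Sop_trunc lam k fh) else Query (coord k)
  | None => Query (coord k)
  end.
Proof.
  unfold Atilde. cbv beta zeta. rewrite length_prefix.
  destruct (block_end n k) as [j|] eqn:Hk; [|reflexivity].
  destruct (block_end_Some n k j Hk) as [Hj <-].
  rewrite sigma_blk_prefix by assumption.
  destruct Rle_dec; [|reflexivity].
  f_equal. apply functional_extensionality. intros i. unfold Sop_trunc.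
  destruct (Nat.ltb_spec i (n j)); [now rewrite nth_prefix | reflexivity].
Qed.

Section FirstSmallBlock.

Variables (fh : nat -> R) (eps : R) (J : nat).
Hypothesis HJ : is_first_small_block lam n a b fh eps J.

Lemma Atilde_query k : (k < n J)%nat -> Atilde lam n a b eps (prefix fh k) = Query (coord k).
Proof.
  intros Hk. rewrite Atilde_prefix.
  destruct (block_end n k) as [j|] eqn:Hj; [|reflexivity].
  destruct (block_end_Some n k j Hj) as [Hj1 <-].
  rewrite (n_lt_n_iff n n_incr) in Hk.
  destruct HJ as [_ [_ Hbig]]. specialize (Hbig j (conj Hj1 Hk)).
  destruct Rle_dec; [lra | reflexivity].
Qed.

Lemma Atilde_stop : Atilde lam n a b eps (prefix fh (n J)) = Stop (Sop_trunc lam (n J) fh).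
Proof.
  destruct HJ as [HJ1 [Hsmall _]].
  rewrite Atilde_prefix, block_end_n by assumption.
  destruct Rle_dec; [reflexivity | contradiction].
Qed.

Lemma obs_Atilde k : (k <= n J)%nat -> obs (Atilde lam n a b) fh eps k = prefix fh k.
Proof.
  induction k as [|k IH]; intros Hk; [reflexivity|].
  simpl. rewrite IH, Atilde_query by lia.
  now rewrite apply_fun_coord, prefix_S.
Qed.

Lemma Atilde_halts : halts_with (Atilde lam n a b) fh eps (n J) (Sop_trunc lam (n J) fh).
Proof.
  split.
  - intros k Hk. rewrite obs_Atilde, Atilde_query by lia.
    exists (coord k). split; [reflexivity | apply in_l2_coord].
  - rewrite obs_Atilde by lia. apply Atilde_stop.
Qed.

End FirstSmallBlock.

End Execution.

Definition jdag_weight (lam : nat -> R) (n : nat -> nat) (a b : R) (j : nat) : R :=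
  sum_n_m (fun k => powerRZ b (2 * (Z.of_nat k - Z.of_nat j))
                      / (a ^ 2 * lam (n (k - 1)%nat) ^ 2)) 1 (j - 1)
  + 1 / lam (n (j - 1)%nat) ^ 2.

Lemma powerRZ_mul_pow_sq (b : R) (k j : nat) :
  0 < b -> (k <= j)%nat -> powerRZ b (2 * (Z.of_nat k - Z.of_nat j)) * (b ^ 2) ^ (j - k) = 1.
Proof.
  intros Hb Hkj. rewrite <- pow_mult, pow_powerRZ, <- powerRZ_add by lra.
  replace (2 * (Z.of_nat k - Z.of_nat j) + Z.of_nat (2 * (j - k)))%Z with 0%Z by lia.
  apply powerRZ_O.
Qed.

Section Cone.

Variables (lam : nat -> R) (n : nat -> nat) (a b : R).
Hypothesis lam_pos : forall i, 0 < lam i.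
Hypothesis lam_decr : forall i, lam (S i) <= lam i.
Hypothesis n_incr : forall j, (n j < n (S j))%nat.
Hypotheses (b_pos : 0 < b) (b_lt_1 : b < 1) (a_gt_1 : 1 < a).

Local Notation sigma := (sigma_blk lam n).

Lemma lam_le i j : (i <= j)%nat -> lam j <= lam i.
Proof. induction 1 as [|j _ IH]; [lra|]. specialize (lam_decr j). lra. Qed.

Lemma thr_pos eps : 0 < eps -> 0 < thr a b eps.
Proof.
  intros Heps. unfold thr. assert (0 < sqrt (1 - b ^ 2)) by (apply sqrt_lt_R0; nra).
  apply Rdiv_lt_0_compat; nra.
Qed.

Lemma thr_sq eps : thr a b eps ^ 2 = eps ^ 2 * (1 - b ^ 2) / (a ^ 2 * b ^ 2).
Proof.
  unfold thr. rewrite <- (pow2_sqrt (1 - b ^ 2)) at 2 by nra.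
  field. nra.
Qed.

Lemma sigma_sq fh j : sigma fh j ^ 2 = block_sum n (fun i => (lam i * fh i) ^ 2) j.
Proof.
  unfold sigma_blk, block_sum. apply pow2_sqrt, sum_n_m_nonneg.
  intros i. apply pow2_ge_0.
Qed.

Lemma cone_sigma_sq fh j r :
  cone lam n a b fh -> (1 <= j)%nat -> (1 <= r)%nat ->
  sigma fh (j + r) ^ 2 <= a ^ 2 * (b ^ 2) ^ r * sigma fh j ^ 2.
Proof.
  intros [_ Hc] Hj Hr.
  replace (a ^ 2 * (b ^ 2) ^ r * sigma fh j ^ 2) with ((a * b ^ r * sigma fh j) ^ 2)
    by (rewrite <- pow_mult, Nat.mul_comm, pow_mult; ring).
  apply pow_incr. split; [apply sqrt_pos | now apply Hc].
Qed.

Lemma tail_sum_le fh J r :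
  cone lam n a b fh -> (1 <= J)%nat -> (1 <= r)%nat ->
  sum_n_m (fun i => (lam i * fh i) ^ 2) (n J) (Nat.pred (n (J + r)))
  <= a ^ 2 * sigma fh J ^ 2 * (b ^ 2 / (1 - b ^ 2)).
Proof.
  intros Hc HJ Hr.
  rewrite sum_n_m_blocks by (assumption || lia).
  replace (S J) with (J + 1)%nat by lia. rewrite <- sum_n_m_shift.
  set (C := a ^ 2 * sigma fh J ^ 2).
  apply Rle_trans with (sum_n_m (fun s => C * (b ^ 2) ^ s) 1 r).
  - apply sum_n_m_le_loc. intros s Hs. rewrite <- sigma_sq.
    unfold C. rewrite (Rmult_comm (a ^ 2) (sigma fh J ^ 2)), Rmult_assoc, Rmult_comm.
    apply cone_sigma_sq; (assumption || lia).
  - replace (sum_n_m _ 1 r) with (C * sum_n_m (pow (b ^ 2)) 1 r)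
      by (symmetry; exact (sum_n_m_mult_l C (pow (b ^ 2)) 1 r)).
    apply Rmult_le_compat_l; [unfold C; nra|].
    apply sum_pow_le. nra.
Qed.

Lemma tail_sum_le_eps_sq fh eps J :
  0 < eps -> sigma fh J <= thr a b eps ->
  a ^ 2 * sigma fh J ^ 2 * (b ^ 2 / (1 - b ^ 2)) <= eps ^ 2.
Proof.
  intros Heps Hsmall.
  assert (Hsq : sigma fh J ^ 2 <= thr a b eps ^ 2).
  { apply pow_incr. split; [apply sqrt_pos | exact Hsmall]. }
  rewrite thr_sq in Hsq.
  replace (eps ^ 2) with (a ^ 2 * (eps ^ 2 * (1 - b ^ 2) / (a ^ 2 * b ^ 2)) * (b ^ 2 / (1 - b ^ 2)))
    by (field; nra).
  apply Rmult_le_compat_r; [apply Rdiv_le_0_compat; nra|].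
  apply Rmult_le_compat_l; nra.
Qed.

Lemma Sop_trunc_error fh eps J :
  cone lam n a b fh -> 0 < eps -> (1 <= J)%nat -> sigma fh J <= thr a b eps ->
  dist_le (Sop lam fh) (Sop_trunc lam (n J) fh) eps.
Proof.
  intros Hc Heps HJ Hsmall.
  set (e := fun i => Sop lam fh i - Sop_trunc lam (n J) fh i).
  assert (He : forall i, e i ^ 2 = if Nat.ltb i (n J) then 0 else (lam i * fh i) ^ 2).
  { intros i. unfold e, Sop, Sop_trunc. destruct (Nat.ltb i (n J)); ring. }
  assert (He_nonneg : forall i, 0 <= e i ^ 2) by (intros i; apply pow2_ge_0).
  assert (He_l2 : in_l2 e).
  { apply (in_l2_dominated e fh (lam 0%nat ^ 2)); [|apply Hc].
    intros i. rewrite He. pose proof (pow2_ge_0 (fh i)).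
    destruct (Nat.ltb i (n J)); [apply Rmult_le_pos; [apply pow2_ge_0 | assumption]|].
    rewrite Rpow_mult_distr. apply Rmult_le_compat_r; [assumption|].
    apply pow_incr. pose proof (lam_pos i). pose proof (lam_le 0 i ltac:(lia)). lra. }
  split; [exact He_l2|]. unfold l2norm.
  rewrite <- (sqrt_pow2 eps) by lra. apply sqrt_le_1_alt.
  apply Series_le_of_sum_n_le; [exact He_l2|].
  intros N.
  pose proof (le_n_self n n_incr (J + S N)).
  pose proof (n_lt_n n n_incr 0 J ltac:(lia)).
  pose proof (n_lt_n n n_incr J (J + S N) ltac:(lia)).
  apply Rle_trans with (sum_n (fun i => e i ^ 2) (Nat.pred (n (J + S N)))).
  { apply sum_n_le_sum_n; [exact He_nonneg | lia]. }
  unfold sum_n. rewrite (sum_n_m_split _ 0 (Nat.pred (n J))) by lia.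
  replace (S (Nat.pred (n J))) with (n J) by lia.
  rewrite (sum_n_m_ext_loc _ (fun _ => 0) 0).
  2:{ intros i Hi. rewrite He. destruct (Nat.ltb_spec i (n J)); [reflexivity | lia]. }
  rewrite (sum_n_m_ext_loc _ (fun i => (lam i * fh i) ^ 2) (n J)).
  2:{ intros i Hi. rewrite He. destruct (Nat.ltb_spec i (n J)); [lia | reflexivity]. }
  rewrite (sum_n_m_const_zero (G := R_AbelianMonoid)), Rplus_0_l.
  eapply Rle_trans; [apply tail_sum_le; (assumption || lia)|].
  now apply tail_sum_le_eps_sq.
Qed.

Lemma sigma_sq_le_block fh k :
  sigma fh k ^ 2 <= lam (n (k - 1)) ^ 2 * block_sum n (fun i => fh i ^ 2) k.
Proof.
  set (L := lam (n (k - 1))). rewrite sigma_sq. unfold block_sum.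
  replace (L ^ 2 * _) with (sum_n_m (fun i => L ^ 2 * fh i ^ 2) (n (k - 1)) (Nat.pred (n k)))
    by exact (sum_n_m_mult_l (L ^ 2) _ _ _).
  apply sum_n_m_le_loc. intros i Hi.
  rewrite Rpow_mult_distr. apply Rmult_le_compat_r; [apply pow2_ge_0|].
  apply pow_incr. pose proof (lam_pos i). pose proof (lam_le _ _ (proj1 Hi)). unfold L. lra.
Qed.

Lemma sigma_sq_weight_le_block fh j k :
  cone lam n a b fh -> (1 <= k < j)%nat ->
  sigma fh j ^ 2 * (powerRZ b (2 * (Z.of_nat k - Z.of_nat j)) / (a ^ 2 * lam (n (k - 1)) ^ 2))
  <= block_sum n (fun i => fh i ^ 2) k.
Proof.
  intros Hc Hkj.
  set (P := powerRZ b _). set (Q := (b ^ 2) ^ (j - k)). set (L := lam (n (k - 1))).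
  set (B := block_sum n (fun i => fh i ^ 2) k).
  assert (HPQ : P * Q = 1) by (apply powerRZ_mul_pow_sq; (assumption || lia)).
  assert (HP : 0 <= P) by (apply powerRZ_le; assumption).
  assert (HL : 0 < L) by apply lam_pos.
  assert (Hj : sigma fh j ^ 2 <= a ^ 2 * Q * (L ^ 2 * B)).
  { replace j with (k + (j - k))%nat at 1 by lia.
    eapply Rle_trans; [apply cone_sigma_sq; (assumption || lia)|].
    apply Rmult_le_compat_l; [apply Rmult_le_pos; [nra | apply pow_le; nra]|].
    apply sigma_sq_le_block. }
  apply Rle_trans with (a ^ 2 * Q * (L ^ 2 * B) * (P / (a ^ 2 * L ^ 2))).
  - apply Rmult_le_compat_r; [|exact Hj].
    apply Rdiv_le_0_compat; [exact HP | apply Rmult_lt_0_compat; apply pow_lt; lra].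
  - replace (a ^ 2 * Q * (L ^ 2 * B) * (P / (a ^ 2 * L ^ 2))) with (B * (P * Q)) by (field; nra).
    rewrite HPQ. lra.
Qed.

Lemma sigma_sq_weight_le fh j :
  cone lam n a b fh -> (1 <= j)%nat ->
  sigma fh j ^ 2 * jdag_weight lam n a b j <= sum_n_m (fun i => fh i ^ 2) (n 0) (Nat.pred (n j)).
Proof.
  intros Hc Hj.
  rewrite sum_n_m_blocks, (sum_n_m_split _ 1 (j - 1) j) by (assumption || lia).
  replace (S (j - 1)) with j by lia. rewrite sum_n_n.
  unfold jdag_weight. rewrite Rmult_plus_distr_l. apply Rplus_le_compat.
  - replace (sigma fh j ^ 2 * _) with
      (sum_n_m (fun k => sigma fh j ^ 2 * (powerRZ b (2 * (Z.of_nat k - Z.of_nat j))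
                                          / (a ^ 2 * lam (n (k - 1)) ^ 2))) 1 (j - 1))
      by exact (sum_n_m_mult_l (sigma fh j ^ 2) _ _ _).
    apply sum_n_m_le_loc. intros k Hk. apply sigma_sq_weight_le_block; (assumption || lia).
  - pose proof (lam_pos (n (j - 1))).
    apply (Rmult_le_reg_l (lam (n (j - 1)) ^ 2)); [apply pow_lt; lra|].
    replace (_ * (sigma fh j ^ 2 * (1 / _))) with (sigma fh j ^ 2) by (field; lra).
    apply sigma_sq_le_block.
Qed.

Lemma jdag_weight_ge_last j : 1 / lam (n (j - 1)) ^ 2 <= jdag_weight lam n a b j.
Proof.
  unfold jdag_weight.
  assert (0 <= sum_n_m (fun k => powerRZ b (2 * (Z.of_nat k - Z.of_nat j))
                                   / (a ^ 2 * lam (n (k - 1)) ^ 2)) 1 (j - 1)).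
  { apply sum_n_m_nonneg. intros k. pose proof (lam_pos (n (k - 1))).
    apply Rdiv_le_0_compat; [apply powerRZ_le; lra | apply Rmult_lt_0_compat; apply pow_lt; lra]. }
  lra.
Qed.

Lemma jdag_weight_pos j : 0 < jdag_weight lam n a b j.
Proof.
  eapply Rlt_le_trans; [|apply jdag_weight_ge_last].
  pose proof (lam_pos (n (j - 1))). apply Rdiv_lt_0_compat; [lra | apply pow_lt; lra].
Qed.

Lemma Series_gt_of_sigma_gt_thr fh eps j :
  cone lam n a b fh -> 0 < eps -> (1 <= j)%nat -> thr a b eps < sigma fh j ->
  eps ^ 2 * jdag_rhs lam n a b j < Series (fun i => fh i ^ 2).
Proof.
  intros Hc Heps Hj Hbig.
  pose proof (thr_pos eps Heps). pose proof (jdag_weight_pos j).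
  change (jdag_rhs lam n a b j) with ((1 - b ^ 2) / (a ^ 2 * b ^ 2) * jdag_weight lam n a b j).
  replace (eps ^ 2 * _) with (thr a b eps ^ 2 * jdag_weight lam n a b j)
    by (rewrite thr_sq; field; nra).
  apply Rlt_le_trans with (sigma fh j ^ 2 * jdag_weight lam n a b j).
  { apply Rmult_lt_compat_r; [assumption | nra]. }
  eapply Rle_trans; [apply sigma_sq_weight_le; assumption|].
  apply sum_n_m_le_Series; [intros i; apply pow2_ge_0 | apply Hc].
Qed.

Lemma first_small_block_le fh eps rho J j :
  cone lam n a b fh -> 0 < eps -> l2norm fh <= rho ->
  is_first_small_block lam n a b fh eps J ->
  (1 <= j)%nat -> rho ^ 2 / eps ^ 2 <= jdag_rhs lam n a b j -> (J <= j)%nat.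
Proof.
  intros Hc Heps Hnorm [_ [_ Hbig]] Hj Hrhs.
  destruct (le_lt_dec J j) as [|HjJ]; [assumption|exfalso].
  pose proof (Series_gt_of_sigma_gt_thr fh eps j Hc Heps Hj (Hbig j (conj Hj HjJ))).
  assert (Hseries : 0 <= Series (fun i => fh i ^ 2)).
  { eapply Rle_trans; [|apply (sum_n_m_le_Series _ (fun i => pow2_ge_0 (fh i)) (proj1 Hc) 0 0)].
    apply sum_n_m_nonneg. intros i. apply pow2_ge_0. }
  assert (Hrho : Series (fun i => fh i ^ 2) <= rho ^ 2).
  { rewrite <- (pow2_sqrt (Series _)) by assumption.
    apply pow_incr. split; [apply sqrt_pos | exact Hnorm]. }
  apply (Rmult_le_compat_l (eps ^ 2)) in Hrhs; [|apply pow2_ge_0].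
  replace (eps ^ 2 * (rho ^ 2 / eps ^ 2)) with (rho ^ 2) in Hrhs by (field; lra).
  lra.
Qed.

Lemma exists_small_block fh eps :
  cone lam n a b fh -> 0 < eps -> exists j, (1 <= j)%nat /\ sigma fh j <= thr a b eps.
Proof.
  intros [_ Hc] Heps. pose proof (thr_pos eps Heps).
  set (s := sigma fh 1). assert (Hs : 0 <= s) by apply sqrt_pos.
  destruct (pow_lt_1_zero b ltac:(rewrite Rabs_pos_eq; lra) (thr a b eps / (a * (s + 1))))
    as [N HN]; [apply Rdiv_lt_0_compat; nra|].
  specialize (HN (S N) ltac:(lia)). rewrite Rabs_pos_eq in HN by (apply pow_le; lra).
  exists (1 + S N)%nat. split; [lia|].
  eapply Rle_trans; [apply Hc; lia|]. fold s.
  apply (Rmult_lt_compat_l (a * (s + 1))) in HN; [|nra].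
  replace (a * (s + 1) * (thr a b eps / (a * (s + 1)))) with (thr a b eps) in HN by (field; nra).
  pose proof (pow_le b (S N) ltac:(lra)). nra.
Qed.

Lemma first_small_block_exists fh eps :
  cone lam n a b fh -> 0 < eps -> exists J, is_first_small_block lam n a b fh eps J.
Proof.
  intros Hc Heps.
  destruct (ex_least_index (sigma fh) (fun _ => thr a b eps) (exists_small_block fh eps Hc Heps))
    as [J [[HJ Hsmall] Hleast]].
  exists J. split; [exact HJ|]. split; [exact Hsmall|].
  intros j Hj. apply Rnot_le_lt. intros Hle.
  specialize (Hleast j (conj (proj1 Hj) Hle)). lia.
Qed.

Lemma jdag_rhs_unbounded (K : R) :
  is_lim_seq lam 0 -> exists j, (1 <= j)%nat /\ K <= jdag_rhs lam n a b j.
Proof.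
  intros Hlim.
  set (c := (1 - b ^ 2) / (a ^ 2 * b ^ 2)).
  assert (Hc : 0 < c)
    by (apply Rdiv_lt_0_compat; [nra | apply Rmult_lt_0_compat; apply pow_lt; lra]).
  assert (Hsq : is_lim_seq (fun j => lam (n j) * lam (n j)) 0).
  { replace (Finite 0) with (Finite (0 * 0)) by (f_equal; ring).
    pose proof (is_lim_seq_subseq _ _ _ (eventually_subseq n n_incr) Hlim).
    now apply is_lim_seq_mult'. }
  assert (Hdelta : 0 < c / (Rabs K + 1)) by (apply Rdiv_lt_0_compat; [|pose proof (Rabs_pos K)]; lra).
  apply is_lim_seq_spec in Hsq. destruct (Hsq (mkposreal _ Hdelta)) as [N HN].
  specialize (HN N (Nat.le_refl N)). simpl in HN.
  set (L := lam (n N)) in HN. assert (HL : 0 < L) by apply lam_pos.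
  rewrite Rminus_0_r, Rabs_pos_eq in HN by nra.
  assert (HKL : K * L ^ 2 <= c).
  { apply (Rmult_lt_compat_l (Rabs K + 1)) in HN; [|pose proof (Rabs_pos K); lra].
    replace ((Rabs K + 1) * (c / (Rabs K + 1))) with c in HN
      by (field; pose proof (Rabs_pos K); lra).
    pose proof (Rle_abs K). nra. }
  exists (S N). split; [lia|].
  change (jdag_rhs lam n a b (S N)) with (c * jdag_weight lam n a b (S N)).
  eapply Rle_trans; [|apply Rmult_le_compat_l; [lra | apply jdag_weight_ge_last]].
  replace (S N - 1)%nat with N by lia. fold L.
  apply (Rmult_le_reg_r (L ^ 2)); [apply pow_lt; lra|].
  replace (c * (1 / L ^ 2) * L ^ 2) with c by (field; lra). exact HKL.
Qed.

End Cone.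

Theorem theorem1 (lam : nat -> R) (n : nat -> nat) (a b : R)
  (Hlam_pos : forall i, 0 < lam i)
  (Hlam_dec : forall i, lam (S i) <= lam i)
  (Hlam_lim : is_lim_seq lam 0)
  (Hn : forall j, (n j < n (S j))%nat)
  (Hb0 : 0 < b) (Hb1 : b < 1) (Ha : 1 < a) :
  (* A~ belongs to A(C) *)
  in_alg_class lam (Atilde lam n a b) (cone lam n a b) /\
  (* cost(A~, f, eps) = n_{j*} *)
  (forall fh, cone lam n a b fh -> forall eps, 0 < eps ->
     exists jstar : nat,
       ((1 <= jstar)%nat /\ sigma_blk lam n fh jstar <= thr a b eps /\
        forall j, (1 <= j < jstar)%nat -> thr a b eps < sigma_blk lam n fh j) /\
       exists g, halts_with (Atilde lam n a b) fh eps (n jstar) g) /\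
  (* cost(A~, C, eps, rho) <= n_{j^dagger} with the bound on j^dagger *)
  (forall eps rho, 0 < eps -> 0 < rho ->
     exists jdag : nat,
       (1 <= jdag)%nat /\
       (forall fh, cone lam n a b fh -> l2norm fh <= rho ->
          forall k g, halts_with (Atilde lam n a b) fh eps k g -> (k <= n jdag)%nat) /\
       (forall j, (1 <= j)%nat ->
          rho ^ 2 / eps ^ 2 <= jdag_rhs lam n a b j -> (jdag <= j)%nat)).
Proof.
  pose proof (first_small_block_exists lam n a b Hb0 Hb1 Ha) as Hfirst.
  split; [|split].
  - intros fh Hc eps Heps. destruct (Hfirst fh eps Hc Heps) as [J HJ].
    exists (n J), (Sop_trunc lam (n J) fh). split.
    + now apply Atilde_halts.
    + destruct HJ as [HJ1 [Hsmall _]]. now apply (Sop_trunc_error lam n a b).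
  - intros fh Hc eps Heps. destruct (Hfirst fh eps Hc Heps) as [J HJ].
    exists J. split; [exact HJ|]. eexists. now apply Atilde_halts.
  - intros eps rho Heps Hrho.
    destruct (ex_least_index (fun _ => rho ^ 2 / eps ^ 2) (jdag_rhs lam n a b)
                (jdag_rhs_unbounded lam n a b Hlam_pos Hn Hb0 Hb1 Ha _ Hlam_lim))
      as [jdag [[Hjdag1 Hjdag] Hleast]].
    exists jdag. split; [exact Hjdag1|]. split.
    + intros fh Hc Hnorm k g Hk. destruct (Hfirst fh eps Hc Heps) as [J HJ].
      rewrite (halts_with_cost_unique _ _ _ _ _ _ _ Hk (Atilde_halts lam n a b Hn fh eps J HJ)).
      apply (n_le_n n Hn).
      now apply (first_small_block_le lam n a b Hlam_pos Hlam_dec Hn Hb0 Hb1 Ha fh eps rho).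
    + intros j Hj Hrhs. exact (Hleast j (conj Hj Hrhs)).
Qed.
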